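(* Let $\mathcal{H}$ be a complex separable Hilbert space and let $T = MN - NM$ where $M, N \in \mathcal{B}(\mathcal{H})$ satisfy $M^2 = 0 = N^2$. Then (a) every connected component of $\sigma(T)$ intersects $\sigma(-T)$; (b) every connected component of $\sigma_e(T)$ intersects $\sigma_e(-T)$.
   Context: $\sigma_e(T)$ denotes the essential spectrum of $T$, i.e. the spectrum of the image of $T$ in the Calkin algebra $\mathcal{B}(\mathcal{H})/\mathcal{K}(\mathcal{H})$. *)

(* Complex numbers are R[i] (real_closed
   complex) for an abstract R : realType; a complex Hilbert space is a
   R[i]-left-module equipped with an inner product that is complete for the
   induced norm. *)
From HB Require Import structures.
From mathcomp Require Import all_boot all_algebra.
From mathcomp Require Import all_classical all_reals all_analysis.
From mathcomp Require Export complex.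
Import numFieldNormedType.Exports.
Import GRing.Theory Num.Theory.

Set Implicit Arguments.
Unset Strict Implicit.
Unset Printing Implicit Defensive.

Local Open Scope classical_set_scope.
Local Open Scope ring_scope.

Section Hilbert.
Variable R : realType.
Local Notation C := R[i].
Variable V : lmodType C.
Variable ip : V -> V -> C.

Definition inner_product : Prop :=
  [/\ (forall x y z, ip (x + y) z = ip x z + ip y z),
      (forall (a : C) x y, ip (a *: x) y = a * ip x y),
      (forall x y, ip y x = Num.conj (ip x y)),
      (forall x, 0 <= ip x x)
    & (forall x, ip x x = 0 -> x = 0)].

Definition ipnorm (x : V) : R := Num.sqrt (complex.Re (ip x x)).

Definition ip_cauchy (u : nat -> V) : Prop :=
  forall e : R, 0 < e -> exists N : nat, forall m n : nat,
    (N <= m)%N -> (N <= n)%N -> ipnorm (u m - u n) < e.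

Definition ip_converges (u : nat -> V) (l : V) : Prop :=
  forall e : R, 0 < e -> exists N : nat, forall n : nat,
    (N <= n)%N -> ipnorm (u n - l) < e.

Definition ip_complete : Prop :=
  forall u : nat -> V, ip_cauchy u -> exists l : V, ip_converges u l.

Definition is_hilbert : Prop := inner_product /\ ip_complete.

Definition ip_separable : Prop :=
  exists d : nat -> V, forall (x : V) (e : R), 0 < e ->
    exists n : nat, ipnorm (x - d n) < e.

Definition bounded_op (T : V -> V) : Prop :=
  (forall (a : C) x y, T (a *: x + y) = a *: T x + T y) /\
  exists K : R, forall x, ipnorm (T x) <= K * ipnorm x.

Definition compact_op (T : V -> V) : Prop :=
  bounded_op T /\
  forall u : nat -> V, (exists K : R, forall n, ipnorm (u n) <= K) ->
    exists phi : nat -> nat, (forall n, (phi n < phi n.+1)%N) /\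
      exists l : V, ip_converges (fun n => T (u (phi n))) l.

Definition op_shift (T : V -> V) (z : C) : V -> V := fun x => T x - z *: x.

Definition spectrum (T : V -> V) : set C :=
  [set z | ~ exists S : V -> V, bounded_op S /\
      (forall x, S (op_shift T z x) = x) /\
      (forall x, op_shift T z (S x) = x)].

(* essential spectrum: z such that the image of T - z I in the Calkin
   algebra B(H)/K(H) is not invertible, i.e. there is no S in B(H) with
   S(T - zI) - I and (T - zI)S - I both compact *)
Definition ess_spectrum (T : V -> V) : set C :=
  [set z | ~ exists S : V -> V, bounded_op S /\
      compact_op (fun x => S (op_shift T z x) - x) /\
      compact_op (fun x => op_shift T z (S x) - x)].

End Hilbert.

Definition components_meet (R : realType) (A B : set R[i]) : Prop :=
  forall z : R[i], A z ->
    (connected_component (A : set R[i]^o) z `&` B) !=set0.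

(* With X := M - N and Y := M + N, the relations M^2 = N^2 = 0 give XY = T and
   YX = -T.  By Jacobson's lemma, XY - z and YX - z are simultaneously
   invertible for z <> 0, and this holds modulo any two-sided ideal of B(H), in
   particular modulo K(H); for z = 0, T is invertible iff -T is.  Hence
   sigma(T) is contained in sigma(-T) and sigma_e(T) in sigma_e(-T), so every
   point of a component of sigma(T) already lies in sigma(-T), and likewise for
   sigma_e. *)

From HB Require Import structures.
From mathcomp Require Import all_boot all_algebra.
From mathcomp Require Import all_classical all_reals all_analysis.
From mathcomp Require Import complex.
From mathcomp Require Import ring lra.
Import order.Order.TTheory GRing.Theory Num.Theory.
Local Open Scope classical_set_scope.
Local Open Scope ring_scope.
Local Open Scope complex_scope.

Set Implicit Arguments.
Unset Strict Implicit.
Unset Printing Implicit Defensive.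

Section LinearFunctions.
Variables (K : pzRingType) (U W : lmodType K) (f : U -> W).
Hypothesis f_lin : linear f.

Lemma linD x y : f (x + y) = f x + f y.
Proof. by rewrite -[x]scale1r f_lin !scale1r. Qed.

Lemma lin0 : f 0 = 0.
Proof. by apply: (@addrI _ (f 0)); rewrite -linD !addr0. Qed.

Lemma linZ a x : f (a *: x) = a *: f x.
Proof. by rewrite -[a *: x]addr0 f_lin lin0 addr0. Qed.

Lemma linN x : f (- x) = - f x.
Proof. by rewrite -scaleN1r linZ scaleN1r. Qed.

Lemma linB x y : f (x - y) = f x - f y.
Proof. by rewrite linD linN. Qed.

End LinearFunctions.

Section InnerProduct.
Variables (R : realType) (V : lmodType R[i]) (ip : V -> V -> R[i]).
Hypothesis ipP : inner_product ip.

Lemma ip_selfE x : ip x x = (complex.Re (ip x x))%:C.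
Proof.
case: ipP => _ _ _ ip_ge0 _; move: (ip_ge0 x).
by case: (ip x x) => a b; rewrite lecE /= => /andP[/eqP ->].
Qed.

Lemma ipnorm_sqr x : ipnorm ip x ^+ 2 = complex.Re (ip x x).
Proof.
apply: sqr_sqrtr; case: ipP => _ _ _ ip_ge0 _; move: (ip_ge0 x).
by case: (ip x x) => a b; rewrite lecE /= => /andP[].
Qed.

Lemma ipnorm_eq0 x : ipnorm ip x = 0 -> x = 0.
Proof.
move=> x0; case: ipP => _ _ _ _ ip_eq0; apply: ip_eq0.
by rewrite ip_selfE -ipnorm_sqr x0 expr0n.
Qed.

Lemma ipDr x y z : ip x (y + z) = ip x y + ip x z.
Proof. by case: ipP => ipDl _ ipC _ _; rewrite ipC ipDl rmorphD [ip x y]ipC [ip x z]ipC. Qed.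

Lemma ipZr (c : R[i]) x y : ip x (c *: y) = Num.conj c * ip x y.
Proof. by case: ipP => _ ipZl ipC _ _; rewrite ipC ipZl rmorphM [ip x y]ipC. Qed.

Lemma ip0l y : ip 0 y = 0.
Proof. by case: ipP => _ ipZl _ _ _; rewrite -(scale0r 0) ipZl mul0r. Qed.

Lemma ip0r x : ip x 0 = 0.
Proof. by rewrite -(scale0r (0 : V)) ipZr rmorph0 mul0r. Qed.

Lemma Re_ip_selfD x y : complex.Re (ip (x + y) (x + y)) =
  complex.Re (ip x x) + complex.Re (ip y y) + 2 * complex.Re (ip x y).
Proof.
case: ipP => ipDl _ ipC _ _; rewrite ipDl !ipDr [ip y x]ipC.
by case: (ip x x) (ip x y) (ip y y) => [? ?] [? ?] [? ?] /=; lra.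
Qed.

Lemma Re_ip_realZ (a b : R) x y :
  complex.Re (ip (a%:C *: x) (b%:C *: y)) = a * b * complex.Re (ip x y).
Proof.
case: ipP => _ ipZl _ _ _; rewrite ipZl ipZr.
by case: (ip x y) => ? ? /=; lra.
Qed.

Lemma Re_ip_le x y : complex.Re (ip x y) <= ipnorm ip x * ipnorm ip y.
Proof.
have [x0|nx0] := eqVneq (ipnorm ip x) 0.
  by rewrite x0 mul0r (ipnorm_eq0 x0) ip0l.
have [y0|ny0] := eqVneq (ipnorm ip y) 0.
  by rewrite y0 mulr0 (ipnorm_eq0 y0) ip0r.
set a := ipnorm ip x; set b := ipnorm ip y.
have ab_gt0 : 0 < a * b by rewrite mulr_gt0 // lt0r ?nx0 ?ny0 sqrtr_ge0.
have := sqr_ge0 (ipnorm ip (b%:C *: x + (- a)%:C *: y)).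
rewrite ipnorm_sqr Re_ip_selfD !Re_ip_realZ -!ipnorm_sqr -/a -/b.
nra.
Qed.

Lemma ipnormD x y : ipnorm ip (x + y) <= ipnorm ip x + ipnorm ip y.
Proof.
rewrite -(@ler_pXn2r _ 2) ?nnegrE ?addr_ge0 ?sqrtr_ge0 //.
rewrite sqrrD !ipnorm_sqr Re_ip_selfD.
by have := Re_ip_le x y; lra.
Qed.

Lemma ipnormZ (c : R[i]) x :
  ipnorm ip (c *: x) = Num.sqrt (complex.Re c ^+ 2 + complex.Im c ^+ 2) * ipnorm ip x.
Proof.
rewrite -sqrtrM ?addr_ge0 ?sqr_ge0 //; congr Num.sqrt.
case: ipP => _ ipZl _ _ _; rewrite ipZl ipZr mulrA ip_selfE.
by case: c => a b /=; ring.
Qed.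

End InnerProduct.

Section BoundedOperators.
Variables (R : realType) (V : lmodType R[i]) (ip : V -> V -> R[i]).
Hypothesis ipP : inner_product ip.
Implicit Types A B K : V -> V.

Lemma bounded_linear A : bounded_op ip A -> linear A.
Proof. by case. Qed.

Lemma bounded_bound A : bounded_op ip A ->
  exists2 k, 0 <= k & forall x, ipnorm ip (A x) <= k * ipnorm ip x.
Proof.
case=> _ [k Ak]; exists `|k| => // x.
by apply: le_trans (Ak x) _; rewrite ler_wpM2r ?sqrtr_ge0 ?ler_norm.
Qed.

Lemma bounded_id : bounded_op ip (fun x => x).
Proof. by split=> //; exists 1 => x; rewrite mul1r. Qed.

Lemma bounded_comp A B : bounded_op ip A -> bounded_op ip B ->
  bounded_op ip (fun x => A (B x)).
Proof.
move=> bA bB; have [kA kA0 Ak] := bounded_bound bA; have [kB _ Bk] := bounded_bound bB.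
split; first by move=> a x y; rewrite (bounded_linear bB) (bounded_linear bA).
exists (kA * kB) => x; apply: le_trans (Ak _) _.
by rewrite -mulrA ler_wpM2l.
Qed.

Lemma bounded_add A B : bounded_op ip A -> bounded_op ip B ->
  bounded_op ip (fun x => A x + B x).
Proof.
move=> bA bB; have [kA _ Ak] := bounded_bound bA; have [kB _ Bk] := bounded_bound bB.
split.
  by move=> a x y; rewrite (bounded_linear bA) (bounded_linear bB) scalerDr addrACA.
exists (kA + kB) => x; apply: le_trans (ipnormD ipP _ _) _.
by rewrite mulrDl lerD.
Qed.

Lemma bounded_scale (c : R[i]) A : bounded_op ip A -> bounded_op ip (fun x => c *: A x).
Proof.
move=> bA; have [kA _ Ak] := bounded_bound bA.
split; first by move=> a x y; rewrite (bounded_linear bA) scalerDr !scalerA mulrC.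
exists (Num.sqrt (complex.Re c ^+ 2 + complex.Im c ^+ 2) * kA) => x.
by rewrite (ipnormZ ipP) -mulrA ler_wpM2l ?sqrtr_ge0.
Qed.

Lemma bounded_opp A : bounded_op ip A -> bounded_op ip (fun x => - A x).
Proof.
move=> /(bounded_scale (-1)).
by congr bounded_op; apply: funext => x; rewrite scaleN1r.
Qed.

Lemma bounded_sub A B : bounded_op ip A -> bounded_op ip B ->
  bounded_op ip (fun x => A x - B x).
Proof. by move=> bA /bounded_opp; apply: bounded_add. Qed.

Lemma bounded_comp_compact A K : bounded_op ip A -> compact_op ip K ->
  compact_op ip (fun x => A (K x)).
Proof.
move=> bA [bK cK]; split; first exact: bounded_comp.
have [kA kA0 Ak] := bounded_bound bA.
move=> u /cK[phi [phi_incr [l Kl]]]; exists phi; split => //; exists (A l) => e e0.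
have [n0 Kn0] := Kl (e / (kA + 1)) (divr_gt0 e0 (ltr_wpDl kA0 ltr01)).
exists n0 => n /Kn0; rewrite ltr_pdivlMr ?ltr_wpDl // => Kn.
rewrite -(linB (bounded_linear bA)); apply: le_lt_trans (Ak _) (le_lt_trans _ Kn).
by rewrite mulrC mulrDr mulr1 lerDl sqrtr_ge0.
Qed.

Lemma compact_comp_bounded K B : compact_op ip K -> bounded_op ip B ->
  compact_op ip (fun x => K (B x)).
Proof.
move=> [bK cK] bB; split; first exact: bounded_comp.
have [kB kB0 Bk] := bounded_bound bB.
move=> u [ku uk]; apply: (cK (fun n => B (u n))).
by exists (kB * ku) => n; apply: le_trans (Bk _) _; rewrite ler_wpM2l.
Qed.

End BoundedOperators.

Arguments bounded_id {R V} ip.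

Section InvertibleModulo.
Variables (R : realType) (V : lmodType R[i]) (ip : V -> V -> R[i]).
Implicit Types (A X Y : V -> V) (z : R[i]).

Definition inv_modulo (ideal : (V -> V) -> Prop) A : Prop :=
  exists S, bounded_op ip S /\
    ideal (fun x => S (A x) - x) /\ ideal (fun x => A (S x) - x).

Definition spectrum_modulo ideal A : set R[i] :=
  [set z | ~ inv_modulo ideal (op_shift A z)].

Definition zero_op A : Prop := forall x, A x = 0.

Lemma zero_op_compl A K : bounded_op ip A -> zero_op K -> zero_op (fun x => A (K x)).
Proof. by move=> bA K0 x; rewrite K0 (lin0 (bounded_linear bA)). Qed.

Lemma zero_op_compr K B : zero_op K -> zero_op (fun x => K (B x)).
Proof. by move=> K0 x; apply: K0. Qed.

Lemma spectrumE A : spectrum ip A = spectrum_modulo zero_op A.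
Proof.
apply: funext => z; apply: propext.
split=> nS [S [bS [SA AS]]]; apply: nS; exists S; split=> //; split=> x.
- by apply/eqP; rewrite -subr_eq0 SA.
- by apply/eqP; rewrite -subr_eq0 AS.
- by rewrite SA subrr.
- by rewrite AS subrr.
Qed.

Lemma ess_spectrumE A : ess_spectrum ip A = spectrum_modulo (compact_op ip) A.
Proof. by []. Qed.

Lemma op_shift0 A : op_shift A 0 = A.
Proof. by apply: funext => x; rewrite /op_shift scale0r subr0. Qed.

Hypothesis ipP : inner_product ip.
Variable ideal : (V -> V) -> Prop.
Hypothesis ideal_compl :
  forall A K, bounded_op ip A -> ideal K -> ideal (fun x => A (K x)).
Hypothesis ideal_compr :
  forall K B, ideal K -> bounded_op ip B -> ideal (fun x => K (B x)).

Lemma inv_moduloN A : linear A -> inv_modulo ideal (fun x => - A x) ->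
  inv_modulo ideal A.
Proof.
move=> linA [S [bS [SA AS]]]; exists (fun x => - S x).
split; first exact: (bounded_opp ipP bS).
split.
- by congr ideal: SA; apply: funext => x; rewrite (linN (bounded_linear bS)).
- by congr ideal: AS; apply: funext => x; rewrite (linN linA).
Qed.

(* Jacobson's lemma: if [S] inverts [YX - z], then [z^-1 (X S Y - 1)]
   inverts [XY - z]. *)
Lemma inv_modulo_shift_comm X Y z : bounded_op ip X -> bounded_op ip Y -> z != 0 ->
  inv_modulo ideal (op_shift (fun x => Y (X x)) z) ->
  inv_modulo ideal (op_shift (fun x => X (Y x)) z).
Proof.
move=> bX bY z0 [S [bS [SA AS]]].
have linX := bounded_linear bX; have linY := bounded_linear bY.
have bzX : bounded_op ip (fun x => z^-1 *: X x) by exact: (bounded_scale ipP _ bX).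
exists (fun x => z^-1 *: (X (S (Y x)) - x)); split; last split.
- apply: (bounded_scale ipP z^-1 (A := fun x => X (S (Y x)) - x)).
  apply: (bounded_sub ipP (A := fun x => X (S (Y x)))) (bounded_id ip).
  exact: bounded_comp bX (bounded_comp bS bY).
- congr ideal: (ideal_compl bzX (ideal_compr SA bY)); apply: funext => x.
  rewrite /op_shift (linB linY) (linZ linY) (linB linX) !scalerBr scalerA mulVf //.
  by rewrite scale1r opprB addrA addrAC addrK.
- congr ideal: (ideal_compl bzX (ideal_compr AS bY)); apply: funext => x.
  rewrite /op_shift !(linB linX, linB linY, linZ linX, linZ linY).
  rewrite !scalerBr !scalerA mulfV // mulVf // !scale1r.
  by symmetry; rewrite opprB addrA addrAC addrK addrAC.
Qed.

Lemma spectrum_modulo_anticomm T X Y : bounded_op ip X -> bounded_op ip Y ->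
  (forall x, X (Y x) = T x) -> (forall x, Y (X x) = - T x) ->
  spectrum_modulo ideal T `<=` spectrum_modulo ideal (fun x => - T x).
Proof.
move=> bX bY /funext XY /funext YX z; apply: contra_not.
have [->|z0] := eqVneq z 0.
  rewrite !op_shift0; apply: inv_moduloN.
  by rewrite -XY; exact: bounded_linear (bounded_comp bX bY).
by rewrite -YX -XY; exact: inv_modulo_shift_comm.
Qed.

End InvertibleModulo.

Lemma components_meet_sub (R : realType) (A B : set R[i]) :
  A `<=` B -> components_meet A B.
Proof.
by move=> AB z Az; exists z; split; [exact: connected_component_refl | exact: AB].
Qed.

Theorem proposition2p12 (R : realType) (V : lmodType R[i]) (ip : V -> V -> R[i])
  (Hhil : is_hilbert ip) (Hsep : ip_separable ip)
  (M N : V -> V) (HM : bounded_op ip M) (HN : bounded_op ip N)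
  (HM2 : forall x, M (M x) = 0) (HN2 : forall x, N (N x) = 0) :
  let T := fun x => M (N x) - N (M x) in
  components_meet (spectrum ip T) (spectrum ip (fun x => - T x)) /\
  components_meet (ess_spectrum ip T) (ess_spectrum ip (fun x => - T x)).
Proof.
move=> T; have ipP := Hhil.1.
have linM := bounded_linear HM; have linN := bounded_linear HN.
pose X x := M x - N x; pose Y x := M x + N x.
have XY x : X (Y x) = T x.
  by rewrite /X /Y (linD linM) (linD linN) HM2 HN2 add0r addr0.
have YX x : Y (X x) = - T x.
  by rewrite /X /Y (linB linM) (linB linN) HM2 HN2 sub0r subr0 opprB addrC.
have bX : bounded_op ip X := bounded_sub ipP HM HN.
have bY : bounded_op ip Y := bounded_add ipP HM HN.
split; apply: components_meet_sub.
  rewrite !spectrumE; apply: (spectrum_modulo_anticomm ipP _ _ bX bY XY YX).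
    exact: zero_op_compl.
  by move=> K B K0 _; apply: zero_op_compr.
rewrite !ess_spectrumE; apply: (spectrum_modulo_anticomm ipP _ _ bX bY XY YX).
  exact: bounded_comp_compact.
exact: compact_comp_bounded.
Qed.
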